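(* Let $G$ be a simple graph of order $n \ge 4$. If $$\mu(\overline{G}) < \sqrt{\frac{(n-2)^2}{n}},$$ then $G$ is Hamilton-connected.
   Context: $\overline{G}$ denotes the complement of $G$. For a simple graph $H$, $\mu(H)$ denotes the largest eigenvalue (spectral radius) of the adjacency matrix of $H$. A graph is Hamilton-connected if every two distinct vertices are joined by a Hamiltonian path (a path containing all vertices). *)

From mathcomp Require Import all_boot all_order all_algebra.
From mathcomp Require Import classical_sets reals.
Set Implicit Arguments. Unset Strict Implicit. Unset Printing Implicit Defensive.
Import Order.TTheory GRing.Theory Num.Theory.
Local Open Scope ring_scope.

Definition simple_graph (n : nat) (G : rel 'I_n) : Prop :=
  symmetric G /\ irreflexive G.

Definition complement (n : nat) (G : rel 'I_n) : rel 'I_n :=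
  fun i j => (i != j) && ~~ G i j.

Definition adjmx (R : realType) (n : nat) (G : rel 'I_n) : 'M[R]_n :=
  \matrix_(i < n, j < n) (G i j)%:R.

(* Spectral radius: the largest eigenvalue of the adjacency matrix
   (the supremum of its (finite, nonempty, real) set of eigenvalues). *)
Definition mu (R : realType) (n : nat) (G : rel 'I_n) : R :=
  sup [set a : R | eigenvalue (adjmx R G) a].

Definition hamiltonian_path (n : nat) (G : rel 'I_n) (u v : 'I_n) : Prop :=
  exists p : seq 'I_n,
    [/\ path G u p, last u p = v, uniq (u :: p) & forall w, w \in u :: p].

Definition hamilton_connected (n : nat) (G : rel 'I_n) : Prop :=
  forall u v : 'I_n, u != v -> hamiltonian_path G u v.

From mathcomp Require Import all_boot all_order all_algebra.
From mathcomp Require Import classical_sets reals.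
From mathcomp Require Import complex polyrcf.
From mathcomp Require Import zify.
From Stdlib Require Import Classical.
Set Implicit Arguments. Unset Strict Implicit. Unset Printing Implicit Defensive.
Import Order.TTheory GRing.Theory Num.Theory.

(* Suppose G is not Hamilton-connected and enlarge it to a maximal non-Hamilton-connected
   supergraph G', adding an edge uv only when d(u) + d(v) > n.  This is legitimate: in a
   Hamiltonian path of G + uv using the edge uv, the degree condition forces consecutive
   vertices z, z' with uz, vz' edges, and re-routing the path through them avoids uv.
   In the complement H of G' every edge ij then satisfies d_H(i) + d_H(j) >= n - 2, hence
   d_H(i) d_H(j) >= n - 3.  The Rayleigh quotient of the adjacency matrix of the complement
   of G (which contains H) at the vector (sqrt d_H(i))_i is then at least sqrt (n - 3), so
   mu >= sqrt (n - 3) >= sqrt ((n - 2)^2 / n). *)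

Section ConsecutivePairs.
Variable T : eqType.
Implicit Types (a b c d : T) (s P Q : seq T).

Lemma mem_zip_behead a b s :
  (a, b) \in zip s (behead s) <-> exists P Q, s = P ++ a :: b :: Q.
Proof.
elim: s => [|x s IHs]; first by split=> // -[[|? ?] [?]].
case: s IHs => [|y s] /= IHs; first by split=> // -[[|? [|? ?]] [?]].
rewrite inE; split.
  case/orP=> [/eqP[-> ->]|/IHs[P [Q ->]]]; first by exists [::], s.
  by exists (x :: P), Q.
case=> -[|p P] [Q /= []]; first by move=> -> -> _; rewrite eqxx.
by move=> _ E; apply/orP; right; apply/IHs; exists P, Q.
Qed.

Lemma sorted_zip_behead (e : rel T) s :
  sorted e s = all [pred ab | e ab.1 ab.2] (zip s (behead s)).
Proof. by elim: s => // x [|y s] //= <-. Qed.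

Lemma count_zip_behead_fst (p : pred T) s :
  count p s <= (count [pred ab | p ab.1] (zip s (behead s))).+1.
Proof.
elim: s => // x [|y s] IHs; first by rewrite /= addn0 leq_b1.
by rewrite /= -addnS leq_add2l.
Qed.

Lemma count_zip_behead_snd (p : pred T) s :
  count p s <= (count [pred ab | p ab.2] (zip s (behead s))).+1.
Proof.
case: s => //= x s.
have -> : count [pred ab | p ab.2] (zip (x :: s) s) =
          count p (unzip2 (zip (x :: s) s)) by rewrite count_map.
by rewrite unzip2_zip ?leqnSn // -add1n leq_add2r leq_b1.
Qed.

Lemma eq_cat_cons2 s1 s2 P Q a b c d :
  s1 ++ a :: b :: s2 = P ++ c :: d :: Q -> c != a -> c != b -> d != a ->
  (exists M, s1 = P ++ c :: d :: M) \/ (exists M, s2 = M ++ c :: d :: Q).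
Proof.
elim: s1 P => [|h s1 IHs1] [|p P] /= E ca cb da.
- by case: E => Eac; rewrite Eac eqxx in ca.
- case: E => _; case: P => [|p' P] [Ebc E]; first by rewrite Ebc eqxx in cb.
  by right; exists P.
- case: E => -> E; case: s1 {IHs1} E => [|h' s1] [Ead E]; first by rewrite Ead eqxx in da.
  by left; exists s1; rewrite Ead.
- case: E => -> /IHs1[] // [M ->]; first by left; exists M.
  by right; exists M.
Qed.

End ConsecutivePairs.

Lemma count_uniq_cover (T : finType) (p : pred T) (s : seq T) :
  uniq s -> (forall w, w \in s) -> count p s = #|p|.
Proof.
move=> Us Cs; rewrite -size_filter -(card_uniqP (filter_uniq p Us)).
by apply: eq_card => w; rewrite mem_filter Cs andbT.
Qed.

Lemma exists_crossing_pair (T : finType) (G : rel T) s u v :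
  irreflexive G -> uniq s -> (forall w, w \in s) ->
  (u, v) \in zip s (behead s) -> #|T| < #|G u| + #|G v| ->
  exists2 zz, zz \in zip s (behead s) & G u zz.1 && G v zz.2.
Proof.
move=> Girr Us Cs uv_s deg_uv; set ps := zip s (behead s).
set A := [pred ab : T * T | G u ab.1]; set B := [pred ab : T * T | G v ab.2].
have size_s : size s = #|T| by rewrite -(card_uniqP Us); apply: eq_card.
have size_ps : size ps = #|T|.-1.
  by rewrite size_zip size_behead size_s; apply/minn_idPr/leq_pred.
have cA : #|G u| <= (count A ps).+1.
  by rewrite -(count_uniq_cover _ Us Cs); apply: count_zip_behead_fst.
have cB : #|G v| <= (count B ps).+1.
  by rewrite -(count_uniq_cover _ Us Cs); apply: count_zip_behead_snd.
(* The pair (u, v) lies in neither A nor B, so A and B, of sizes at least d(u) - 1 and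
   d(v) - 1, cannot be disjoint among the #|T| - 1 consecutive pairs. *)
have cAB : count (predU A B) ps < size ps.
  rewrite -(count_predC (predU A B)) -{1}[count _ ps]addn0 ltn_add2l -has_count.
  by apply/hasP; exists (u, v) => //=; rewrite !Girr.
suff /hasP[zz zz_ps ABzz] : has (predI A B) ps by exists zz.
rewrite has_count; have := count_predUI A B ps; lia.
Qed.

Section Rerouting.
Variables (T : eqType) (G : rel T).
Hypothesis Gsym : symmetric G.
Implicit Types (s P Q M : seq T).

Lemma sorted_rev_sym s : sorted G (rev s) = sorted G s.
Proof. by rewrite rev_sorted; case: s => //= x s; apply: eq_path => a b; rewrite Gsym. Qed.

Definition reroutes (x0 : T) s s' :=
  [/\ sorted G s', perm_eq s s', head x0 s' = head x0 s & last x0 s' = last x0 s].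

Lemma reroutes_rev x0 s s' : reroutes x0 (rev s) s' -> reroutes x0 s (rev s').
Proof.
have head_rev x t : head x (rev t) = last x t.
  by case/lastP: t => // t y; rewrite rev_rcons last_rcons.
case=> S' P' H' L'; split.
- by rewrite sorted_rev_sym.
- by rewrite perm_sym perm_rev perm_sym -perm_rev.
- by rewrite head_rev L' -head_rev revK.
- by rewrite -head_rev revK H' head_rev.
Qed.

Lemma reroutes_chord_before x0 P M s2 u v z z' :
  sorted G (P ++ z :: z' :: rcons M u) -> sorted G (v :: s2) -> G u z -> G v z' ->
  reroutes x0 (P ++ z :: z' :: M ++ u :: v :: s2)
              (P ++ z :: u :: rev (z' :: M) ++ v :: s2).
Proof.
rewrite sorted_cat_cons => /andP[SPz /= /andP[_ SM]] Sv uz vz'; split.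
- rewrite sorted_cat_cons SPz /= Gsym uz /=.
  change (sorted G ((u :: rev (z' :: M)) ++ v :: s2)).
  have -> : u :: rev (z' :: M) = rev (z' :: rcons M u) by rewrite !rev_cons rev_rcons.
  by rewrite sorted_cat_cons -rev_cons sorted_rev_sym /= vz' SM.
- rewrite perm_cat2l perm_cons; apply/permP => p.
  by rewrite /= count_cat /= count_cat count_rev /=; lia.
- by case: P {SPz}.
- by rewrite !last_cat /= !last_cat.
Qed.

Lemma reroutes_chord x0 s1 s2 P Q u v z z' :
  irreflexive G -> ~~ G u v -> G u z -> G v z' ->
  s1 ++ u :: v :: s2 = P ++ z :: z' :: Q ->
  sorted G (rcons s1 u) -> sorted G (v :: s2) ->
  exists s', reroutes x0 (s1 ++ u :: v :: s2) s'.
Proof.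
move=> Girr nuv uz vz' Es S1 S2.
have zu : z != u by apply: contraTneq uz => ->; rewrite Girr.
have zv : z != v by apply: contraTneq uz => ->.
have z'u : z' != u by apply: contraTneq vz' => ->; rewrite Gsym.
case: (eq_cat_cons2 Es zu zv z'u) => [[M E1]|[M E2]]; subst.
  rewrite -catA; eexists; apply: reroutes_chord_before => //.
  by move: S1; rewrite rcons_cat.
(* A chord after v is a chord before u in the reversed path. *)
have Erev : rev (s1 ++ u :: v :: M ++ z :: z' :: Q) =
            rev Q ++ z' :: z :: rev M ++ v :: u :: rev s1.
  by rewrite !(rev_cat, rev_cons) -!cats1 -!catA.
suff [s'' R] : exists s'', reroutes x0 (rev (s1 ++ u :: v :: M ++ z :: z' :: Q)) s''.
  by exists (rev s''); apply: reroutes_rev.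
rewrite Erev; eexists; apply: reroutes_chord_before => //.
  by rewrite -sorted_rev_sym !(rev_cat, rev_cons, rev_rcons) !revK !cat_rcons.
by rewrite -sorted_rev_sym rev_cons revK.
Qed.

End Rerouting.

Definition add_edge (T : eqType) (G : rel T) (u v : T) : rel T :=
  fun a b => G a b || (a == u) && (b == v) || (a == v) && (b == u).

Section AddEdge.
Variables (T : finType) (G : rel T).
Hypotheses (Gsym : symmetric G) (Girr : irreflexive G).

Lemma add_edgeC u v : add_edge G u v =2 add_edge G v u.
Proof. by move=> a b; rewrite /add_edge -orbA (orbC (_ && _)) orbA. Qed.

Lemma add_edge_sym u v : symmetric (add_edge G u v).
Proof. by move=> a b; rewrite /add_edge Gsym orbAC (andbC (b == u)) (andbC (b == v)). Qed.

Lemma add_edge_irr u v : u != v -> irreflexive (add_edge G u v).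
Proof.
move=> uv a; rewrite /add_edge Girr /=.
by apply/negP => /orP[] /andP[/eqP-> /eqP Ea]; rewrite Ea eqxx in uv.
Qed.

Lemma sorted_add_edge_notin u v w s : w \in [:: u; v] -> w \notin s ->
  sorted (add_edge G u v) s -> sorted G s.
Proof.
move=> uvw ws; apply: (sub_in_sorted (P := predC1 w)); last by rewrite all_predC has_pred1.
move=> a b /negPf aw /negPf bw; rewrite /add_edge.
by move: uvw; rewrite !inE => /orP[] /eqP Ew; rewrite -Ew aw bw /= !andbF !orbF.
Qed.

Lemma sorted_add_edge_split s1 s2 u v :
  uniq (s1 ++ u :: v :: s2) -> sorted (add_edge G u v) (s1 ++ u :: v :: s2) ->
  sorted G (rcons s1 u) /\ sorted G (v :: s2).
Proof.
move=> Us; rewrite sorted_cat_cons => /andP[S1 /= /andP[_ S2]]; split.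
  apply: (sorted_add_edge_notin (w := v)) S1; first by rewrite !inE eqxx orbT.
  have: uniq (rcons s1 u ++ v :: s2) by rewrite cat_rcons.
  by rewrite cat_uniq => /and3P[_ /hasPn/(_ v (mem_head _ _))].
apply: (sorted_add_edge_notin (w := u) (s := v :: s2)) S2; first by rewrite !inE eqxx.
by move: Us; rewrite cat_uniq => /and3P[_ _ /andP[]].
Qed.

Lemma reroutes_across_added_edge x0 s u v :
  ~~ G u v -> #|T| < #|G u| + #|G v| -> uniq s -> (forall w, w \in s) ->
  sorted (add_edge G u v) s -> (u, v) \in zip s (behead s) ->
  exists s', reroutes G x0 s s'.
Proof.
move=> nuv deg_uv Us Cs Ss uv_s.
have [[z z'] /mem_zip_behead[P [Q Ez]] /andP[uz vz']] :=
  exists_crossing_pair Girr Us Cs uv_s deg_uv.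
have /mem_zip_behead[s1 [s2 Es]] := uv_s.
rewrite Es in Us Ss Ez *; have [S1 S2] := sorted_add_edge_split Us Ss.
exact: reroutes_chord Ez S1 S2.
Qed.

Lemma add_edge_reroutes x0 s u v :
  ~~ G u v -> #|T| < #|G u| + #|G v| -> uniq s -> (forall w, w \in s) ->
  sorted (add_edge G u v) s -> exists s', reroutes G x0 s s'.
Proof.
move=> nuv deg_uv Us Cs Ss.
case: (boolP (sorted G s)) => [SG|]; first by exists s.
rewrite sorted_zip_behead => /allPn[[a b] ab_s /= nGab].
have := Ss; rewrite sorted_zip_behead => /allP/(_ _ ab_s).
rewrite /add_edge /= (negbTE nGab) /= => /orP[] /andP[/eqP Ea /eqP Eb]; subst a b.
  exact: (reroutes_across_added_edge x0 (u := u) (v := v)).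
apply: (reroutes_across_added_edge x0 (u := v) (v := u)) => //; first by rewrite addnC.
by apply: sub_sorted Ss => a b; rewrite add_edgeC.
Qed.

End AddEdge.

Section HamiltonConnected.
Variables (n : nat) (G : rel 'I_n).
Hypotheses (Gsym : symmetric G) (Girr : irreflexive G).

Lemma hamiltonian_path_add_edge u v x y : ~~ G u v -> n < #|G u| + #|G v| ->
  hamiltonian_path (add_edge G u v) x y -> hamiltonian_path G x y.
Proof.
move=> nuv deg_uv [p [Sp Lp Up Cp]].
rewrite -[n in n < _]card_ord in deg_uv.
have [[|x' p'] [/= Sp' Pp' Hx Lp']] := add_edge_reroutes Gsym Girr x nuv deg_uv Up Cp Sp.
  by move/perm_size: Pp'.
subst x'; exists p'; split => //; first by rewrite Lp'.
  by rewrite -(perm_uniq Pp').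
by move=> w; rewrite -(perm_mem Pp').
Qed.

Lemma hamilton_connected_add_edge u v : ~~ G u v -> n < #|G u| + #|G v| ->
  hamilton_connected (add_edge G u v) -> hamilton_connected G.
Proof. by move=> nuv deg_uv HC x y xy; apply: hamiltonian_path_add_edge (HC x y xy). Qed.

End HamiltonConnected.

Lemma complete_hamilton_connected n (G : rel 'I_n) :
  (forall a b, a != b -> G a b) -> hamilton_connected G.
Proof.
move=> Gc x y xy.
have path_uniq a l : uniq (a :: l) -> path G a l.
  elim: l a => //= b l IHl a; rewrite inE negb_or => /andP[/andP[ab _] Ul].
  by rewrite Gc //; apply: IHl.
pose p := rcons [seq w <- enum 'I_n | (w != x) && (w != y)] y.
have Up : uniq (x :: p).
  rewrite /= /p rcons_uniq mem_rcons inE negb_or xy !mem_filter !eqxx /= andbF.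
  by rewrite filter_uniq ?enum_uniq.
exists p; split; [exact: path_uniq | exact: last_rcons | exact: Up |].
move=> w; rewrite inE /p mem_rcons inE mem_filter mem_enum andbT.
by case: (w == x); case: (w == y).
Qed.

Lemma maximal_non_hamilton_connected n (G : rel 'I_n) :
  symmetric G -> irreflexive G -> ~ hamilton_connected G ->
  exists G' : rel 'I_n, [/\ symmetric G', irreflexive G', subrel G G',
    ~ hamilton_connected G' &
    forall a b, complement G' a b -> #|G' a| + #|G' b| <= n].
Proof.
have [k] := ubnP #|[set ab : 'I_n * 'I_n | ~~ G ab.1 ab.2]|.
elim: k G => // k IHk G lt_k Gsym Girr nHC.
pose addable := [pred ab : 'I_n * 'I_n |
  complement G ab.1 ab.2 && (n < #|G ab.1| + #|G ab.2|)].
case: (pickP addable); last first.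
  move=> stable; exists G; split => // a b Hab.
  by move: (stable (a, b)); rewrite /= Hab /= => /negbT; rewrite -leqNgt.
move=> [u v] /= /andP[/andP[uv nuv] deg_uv].
have nHC' : ~ hamilton_connected (add_edge G u v).
  by move/(hamilton_connected_add_edge Gsym Girr nuv deg_uv).
have lt_k' : #|[set ab : 'I_n * 'I_n | ~~ add_edge G u v ab.1 ab.2]| < k.
  rewrite ltnS in lt_k; apply: (leq_trans _ lt_k); apply: proper_card; apply/properP; split.
    by apply/fintype.subsetP => -[a b]; rewrite !inE /add_edge /= !negb_or => /andP[/andP[]].
  by exists (u, v); rewrite !inE /add_edge /= ?nuv // !eqxx orbT.
have [G' [G'sym G'irr GG' nHCG' stable]] :=
  IHk _ lt_k' (add_edge_sym Gsym u v) (add_edge_irr Girr uv) nHC'.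
by exists G'; split => // a b Gab; apply: GG'; rewrite /add_edge Gab.
Qed.

Lemma card_add_complement n (G : rel 'I_n) i :
  irreflexive G -> #|G i| + #|complement G i| = n.-1.
Proof.
move=> Girr; rewrite -[n in n.-1]card_ord -(cardC1 i) -(cardID (G i) (predC1 i)).
congr (_ + _); apply: eq_card => j; rewrite !unfold_in /= /complement.
  by case: (eqVneq j i) => [->|]; rewrite ?Girr.
by rewrite eq_sym andbC.
Qed.

Lemma complement_card_mul_ge n (G : rel 'I_n) i j :
  symmetric G -> irreflexive G -> #|G i| + #|G j| <= n -> complement G i j ->
  n - 3 <= #|complement G i| * #|complement G j|.
Proof.
move=> Gsym Girr deg_ij Hij.
have Hji : complement G j i by rewrite /complement eq_sym Gsym.
have Di : 0 < #|complement G i| by apply/card_gt0P; exists j.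
have Dj : 0 < #|complement G j| by apply/card_gt0P; exists i.
have := card_add_complement i Girr; have := card_add_complement j Girr.
nia.
Qed.

Section Rayleigh.
Local Open Scope ring_scope.
Local Open Scope sesquilinear_scope.
Variable R : realType.

Lemma hermitian_eigenvalue_ge_rayleigh n (B : 'M[R[i]]_n) (y : 'rV[R[i]]_n) :
  (0 < n)%N -> B \is hermsymmx ->
  exists j : 'I_n, [/\ eigenvalue B (spectral_diag B 0 j),
    spectral_diag B 0 j \is Num.real &
    (y *m B *m y^t*) 0 0 <= spectral_diag B 0 j * (y *m y^t*) 0 0].
Proof.
move=> n_gt0 Bh; set P := spectralmx B; set d := spectral_diag B.
have BE : B = invmx P *m diag_mx d *m P by apply/orthomx_spectralP/hermitian_normalmx.
have d_real j : d 0 j \is Num.real by apply: (mxOverP (hermitian_spectral_diag_real Bh)).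
have P_unit : P \in unitmx by apply: spectral_unit.
have [j d_max] : exists j : 'I_n, forall k, d 0 k <= d 0 j.
  exists (Order.arg_max (Ordinal n_gt0) xpredT (fun j => complex.Re (d 0 j))).
  move=> k; rewrite -(RRe_real (d_real k)); case: arg_maxP => // l _ le_l.
  by rewrite -(RRe_real (d_real l)) lecR; apply: le_l.
exists j; split; [|exact: d_real|].
  apply/eigenvalueP; exists (delta_mx 0 j *m P).
    rewrite {1}BE !mulmxA -[_ *m P *m invmx P]mulmxA mulmxV // mulmx1.
    rewrite mul_mx_diag scalemxAl; congr (_ *m _); apply/matrixP => a b.
    rewrite !mxE ord1; case: (eqVneq b j) => [->|_]; rewrite ?eqxx /=; first exact: mulrC.
    by rewrite mul0r mulr0.
  apply/eqP => /(congr1 (mulmx^~ (invmx P))).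
  rewrite -mulmxA mulmxV // mulmx1 mul0mx => /matrixP/(_ 0 j).
  by rewrite !mxE !eqxx /= => /eqP; rewrite oner_eq0.
have PtP : P^t* *m P = 1%:M by rewrite -invmx_unitary ?mulVmx // spectral_unitarymx.
set z := y *m P^t*.
have zE : P *m y^t* = z^t* by rewrite /z trmx_mul map_mxM trmxCK.
have -> : y *m B *m y^t* = z *m diag_mx d *m z^t*.
  by rewrite BE invmx_unitary ?spectral_unitarymx // !mulmxA -[_ *m P *m _]mulmxA zE.
have -> : y *m y^t* = z *m z^t*.
  by rewrite -zE /z mulmxA -[y *m _ *m P]mulmxA PtP mulmx1.
rewrite mul_mx_diag !mxE mulr_sumr; apply: ler_sum => k _; rewrite !mxE.
rewrite [X in X <= _]mulrAC [X in X <= _]mulrC; apply: ler_wpM2r; last exact: d_max.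
exact: mul_conjC_ge0.
Qed.

Lemma symmetric_eigenvalue_ge_rayleigh n (A : 'M[R]_n) (x : 'rV[R]_n) :
  (0 < n)%N -> A^T = A ->
  exists a, eigenvalue A a /\ (x *m A *m x^T) 0 0 <= a * (x *m x^T) 0 0.
Proof.
move=> n_gt0 A_sym; pose f := real_complex R.
have f_conj r : (f r)^* = f r by apply/CrealP; rewrite complex_real.
have Ah : map_mx f A \is hermsymmx.
  apply: realsym_hermsym; last by apply/mxOverP => i j; rewrite mxE complex_real.
  apply/is_hermitianmxP; rewrite expr0 scale1r; apply/matrixP => i j.
  by rewrite !mxE -{1}A_sym mxE.
have [j [ej rj le_c]] := hermitian_eigenvalue_ge_rayleigh (map_mx f x) n_gt0 Ah.
set c := spectral_diag _ 0 j in ej rj le_c; exists (complex.Re c); split.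
  move: ej; rewrite -(RRe_real rj) !eigenvalue_root_char -map_char_poly.
  by rewrite (fmorph_root f).
have xt : (map_mx f x)^t* = map_mx f x^T by apply/matrixP => a b; rewrite !mxE f_conj.
by move: le_c; rewrite xt -!map_mxM !mxE -(RRe_real rj) -rmorphM lecR.
Qed.

End Rayleigh.

Local Open Scope ring_scope.

Lemma eigenvalue_le_mu (R : realType) n (G : rel 'I_n) (a : R) :
  eigenvalue (adjmx R G) a -> a <= mu R G.
Proof.
have cpN0 : char_poly (adjmx R G) != 0 by rewrite monic_neq0 ?char_poly_monic.
have ub b : eigenvalue (adjmx R G) b -> b <= cauchy_bound (char_poly (adjmx R G)).
  rewrite eigenvalue_root_char => /rootP /(cauchy_boundP cpN0) /ltW.
  exact: le_trans (ler_norm b).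
move=> ea; apply: sup_upper_bound => //; split; first by exists a.
by exists (cauchy_bound (char_poly (adjmx R G))) => b /ub.
Qed.

Lemma sqrt_deg_prod_le_mu (R : realType) n (K H : rel 'I_n) c :
  symmetric K -> subrel H K -> (exists i j, H i j) ->
  (forall i j, H i j -> c <= #|H i| * #|H j|)%N ->
  Num.sqrt (c%:R : R) <= mu R K.
Proof.
move=> Ksym HK [i0 [j0 Hij0]] Hc.
have n_gt0 : (0 < n)%N := leq_ltn_trans (leq0n i0) (ltn_ord i0).
pose d i : R := #|H i|%:R.
have d_sum i : d i = \sum_j (H i j)%:R.
  rewrite /d -sum1_card natr_sum big_mkcond; apply: eq_bigr => j _.
  by have -> : (j \in H i) = H i j by []; case: (H i j).
have A_sym : (adjmx R K)^T = adjmx R K by apply/matrixP => i j; rewrite !mxE Ksym.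
pose x := \row_i Num.sqrt (d i).
have [a [ea le_a]] := symmetric_eigenvalue_ge_rayleigh x n_gt0 A_sym.
have xx : (x *m x^T) 0 0 = \sum_i d i.
  by rewrite !mxE; apply: eq_bigr => i _; rewrite !mxE -expr2 sqr_sqrtr ?ler0n.
have sum_gt0 : 0 < \sum_i d i.
  rewrite (bigD1 i0) //=; apply: (@lt_le_trans _ _ (d i0)).
    by rewrite ltr0n; apply/card_gt0P; exists j0.
  by rewrite lerDl sumr_ge0 // => i _; apply: ler0n.
have xAx : Num.sqrt c%:R * \sum_i d i <= (x *m adjmx R K *m x^T) 0 0.
  rewrite !mxE mulr_sumr; apply: ler_sum => j _.
  rewrite d_sum mulr_sumr !mxE mulr_suml; apply: ler_sum => i _; rewrite !mxE.
  have [Hji|_] := boolP (H j i); last by rewrite mulr0 !mulr_ge0 ?sqrtr_ge0 ?ler0n.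
  rewrite Ksym HK // !mulr1 mulrC -sqrtrM ?ler0n // -natrM ler_wsqrtr // ler_nat.
  exact: Hc.
rewrite -xx in sum_gt0 xAx.
apply: le_trans (eigenvalue_le_mu ea).
by rewrite -(ler_pM2r sum_gt0); apply: le_trans xAx le_a.
Qed.

Theorem theorem3p2 (R : realType) (n : nat) (G : rel 'I_n) :
  (4 <= n)%N -> simple_graph G ->
  mu R (complement G) < Num.sqrt (((n - 2)%N%:R ^+ 2) / n%:R) ->
  hamilton_connected G.
Proof.
move=> n_ge4 [Gsym Girr] mu_lt; apply: NNPP => nHC.
have [G' [G'sym G'irr GG' nHC' stable]] := maximal_non_hamilton_connected Gsym Girr nHC.
have G'_incomplete : exists a b, complement G' a b.
  apply: NNPP => noH; apply/nHC'/complete_hamilton_connected => a b ab.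
  by apply/negPn/negP => nab; apply: noH; exists a, b; rewrite /complement ab.
have Gc_sym : symmetric (complement G) by move=> i j; rewrite /complement eq_sym Gsym.
have sub_c : subrel (complement G') (complement G).
  by move=> i j /andP[ij nG'ij]; rewrite /complement ij; apply: contra nG'ij; apply: GG'.
have := sqrt_deg_prod_le_mu R Gc_sym sub_c G'_incomplete
  (fun i j Hij => complement_card_mul_ge G'sym G'irr (stable i j Hij) Hij).
apply/negP; rewrite -ltNge; apply: lt_le_trans mu_lt _.
apply: ler_wsqrtr; rewrite ler_pdivrMr ?ltr0n; last exact: leq_trans n_ge4.
by rewrite -natrX -natrM ler_nat; nia.
Qed.
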